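(* Let $d=\{0,\dots,c-1\}$ and let $\tilde f$ be a real-valued function on row-stochastic matrices $p\in[0,1]^{n\times c}$ that is entry-wise concave, i.e., $\sum_{r\in d}p_{ir}\tilde f(\operatorname{der}(i,r;p))\le\tilde f(p)$ for all such $p$ and all $i\in[n]$. Let $p_{\mathrm{init}}$ be row-stochastic. Consider greedy derandomization: starting from $p_{\mathrm{cur}}=p_{\mathrm{init}}$, repeatedly choose $(i^*,x^* )\in\arg\min_{(i,x)\in[n]\times d}\tilde f(\operatorname{der}(i,x;p_{\mathrm{cur}}))$ and set $p_{\mathrm{cur}}\leftarrow\operatorname{der}(i^*,x^*;p_{\mathrm{cur}})$. Then there is a finite sequence of such greedy steps (with ties broken suitably) ending at $p_{\mathrm{final}}$ such that (1) every row of $p_{\mathrm{final}}$ is an indicator vector (so $p_{\mathrm{final}}$ corresponds to a point of $d^n$); (2) $\tilde f(p_{\mathrm{final}})\le\tilde f(p_{\mathrm{init}})$; (3) $\tilde f(p_{\mathrm{final}})\le\min_{(i,x)\in[n]\times d}\tilde f(\operatorname{der}(i,x;p_{\mathrm{final}}))$.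
   Context: For $p\in[0,1]^{n\times c}$, $i\in[n]$, $x\in d$, $\operatorname{der}(i,x;p)$ is the matrix equal to $p$ except that its $i$-th row is replaced by the indicator vector of $x$ (entry $1$ in column $x$, $0$ elsewhere). A matrix is row-stochastic if all entries lie in $[0,1]$ and each row sums to $1$. *)

From HB Require Import structures.
From mathcomp Require Import all_boot all_order all_algebra.
From mathcomp Require Import reals.
Set Implicit Arguments. Unset Strict Implicit. Unset Printing Implicit Defensive.
Import Order.TTheory GRing.Theory Num.Theory.
Local Open Scope ring_scope.

Definition row_stochastic (R : realType) (n c : nat) (p : 'M[R]_(n, c)) : Prop :=
  (forall i j, 0 <= p i j /\ p i j <= 1) /\
  (forall i, \sum_(j < c) p i j = 1).

Definition der (R : realType) (n c : nat) (i : 'I_n) (x : 'I_c)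
    (p : 'M[R]_(n, c)) : 'M[R]_(n, c) :=
  \matrix_(k < n, j < c) (if k == i then (j == x)%:R else p k j).

Definition entrywise_concave (R : realType) (n c : nat) (f : 'M[R]_(n, c) -> R)
  : Prop :=
  forall p, row_stochastic p ->
    forall i : 'I_n, \sum_(r < c) p i r * f (der i r p) <= f p.

Fixpoint greedy_steps (R : realType) (n c : nat) (f : 'M[R]_(n, c) -> R)
    (p : 'M[R]_(n, c)) (s : seq ('I_n * 'I_c)) : Prop :=
  match s with
  | [::] => True
  | (i, x) :: s' =>
      (forall (j : 'I_n) (y : 'I_c), f (der i x p) <= f (der j y p)) /\
      greedy_steps f (der i x p) s'
  end.

Fixpoint run_steps (R : realType) (n c : nat) (p : 'M[R]_(n, c))
    (s : seq ('I_n * 'I_c)) : 'M[R]_(n, c) :=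
  match s with
  | [::] => p
  | (i, x) :: s' => run_steps (der i x p) s'
  end.

Definition integral_rows (R : realType) (n c : nat) (p : 'M[R]_(n, c)) : Prop :=
  forall i : 'I_n, exists x : 'I_c, forall j : 'I_c, p i j = (j == x)%:R.

(* A greedy run never leaves the finite family of matrices obtained from
   p_init by fixing some rows to indicator vectors. If some step strictly
   decreases f, the greedy step does, which shrinks the set of family members
   with a smaller f-value. Otherwise a not-yet-fixed row i can be fixed at no
   cost: by entry-wise concavity f(p) dominates a convex combination of the
   f(der(i,r;p)), so one of them is at most f(p), and as no step decreases f
   it is a greedy minimum. The pair (number of family members below the current
   value, number of free rows) thus decreases lexicographically, and the run
   stops at an integral matrix from which no step decreases f. *)
From HB Require Import structures.
From mathcomp Require Import all_boot all_order all_algebra.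
From mathcomp Require Import reals.
Import Order.TTheory GRing.Theory Num.Theory.
Local Open Scope ring_scope.

Lemma exists_le_convex_comb (R : realFieldType) (I : finType) (q F : I -> R) :
  (forall i, 0 <= q i) -> \sum_i q i = 1 -> exists i, F i <= \sum_i q i * F i.
Proof.
move=> q_ge0 q_sum1.
have [i0 _ | I_empty] := pickP (@predT I); last first.
  by move: q_sum1; rewrite big_pred0 // => /eqP; rewrite eq_sym oner_eq0.
have [i _ F_min] := @arg_minP _ R I i0 predT F isT.
exists i; rewrite -[F i]mul1r -q_sum1 big_distrl /=.
by apply: ler_sum => j _; rewrite ler_wpM2l // F_min.
Qed.

Lemma ltn_lex_measure (k a a' b b' : nat) :
  (b' < k)%N -> (a' < a)%N -> (a' * k + b' < a * k + b)%N.
Proof.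
move=> lt_b'k lt_a'a; apply: (@leq_trans (a'.+1 * k)).
  by rewrite mulSn addnC ltn_add2r.
by rewrite (leq_trans _ (leq_addr b _)) // leq_mul2r lt_a'a orbT.
Qed.

Section GreedyDerandomization.
Variables (R : realType) (n c : nat) (f : 'M[R]_(n, c) -> R).
Variable p_init : 'M[R]_(n, c).
Hypothesis f_concave : entrywise_concave f.
Hypothesis p_init_stochastic : row_stochastic p_init.

(* [g i = Some x] records that row [i] has been fixed to the indicator of [x];
   [None] leaves the row of [p_init]. *)
Definition row_fixing := {ffun 'I_n -> option 'I_c}.

Definition fixed_mx (g : row_fixing) : 'M[R]_(n, c) :=
  \matrix_(k, j) if g k is Some x then (j == x)%:R else p_init k j.

Definition fix_row (g : row_fixing) (i : 'I_n) (x : 'I_c) : row_fixing :=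
  [ffun k => if k == i then Some x else g k].

Definition free_rows (g : row_fixing) := [set i | g i == None].

Definition lower_fixings (g : row_fixing) :=
  [set h : row_fixing | f (fixed_mx h) < f (fixed_mx g)].

Lemma fixed_mx_fix_row g i x : fixed_mx (fix_row g i x) = der i x (fixed_mx g).
Proof. by apply/matrixP => k j; rewrite !mxE ffunE; case: (k == i); rewrite ?mxE. Qed.

Lemma fixed_mx_stochastic g : row_stochastic (fixed_mx g).
Proof.
have [p_bounds p_sum1] := p_init_stochastic; split=> [i j | i].
  by rewrite mxE; case: (g i) => [x|//]; case: (j == x); rewrite ?ler01 ?lexx.
under eq_bigr do rewrite mxE.
case: (g i) => [x|]; last exact: p_sum1.
by rewrite (bigD1 x) //= eqxx big1 ?addr0 // => j /negbTE ->.
Qed.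

Lemma free_rows_fix_row (g : row_fixing) i x :
  g i = None -> free_rows (fix_row g i x) \proper free_rows g.
Proof.
move=> g_i; apply/properP; split.
  by apply/subsetP => k; rewrite !inE ffunE; case: (k == i).
by exists i; rewrite !inE ?g_i // ffunE eqxx.
Qed.

Lemma integral_fixed_mx (g : row_fixing) :
  free_rows g = set0 -> integral_rows (fixed_mx g).
Proof.
move=> no_free i; case g_i: (g i) => [x|].
  by exists x => j; rewrite mxE g_i.
by move/setP/(_ i): no_free; rewrite !inE g_i.
Qed.

Definition greedy_choice (p : 'M[R]_(n, c)) (i : 'I_n) (x : 'I_c) : Prop :=
  forall j y, f (der i x p) <= f (der j y p).

Definition greedy_derandomizes (p : 'M[R]_(n, c)) :=
  exists s : seq ('I_n * 'I_c),
    greedy_steps f p s /\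
    let p_final := run_steps p s in
    integral_rows p_final /\
    f p_final <= f p /\
    (forall (i : 'I_n) (x : 'I_c), f p_final <= f (der i x p_final)).

Lemma greedy_derandomizes_step {g : row_fixing} {i x} :
  greedy_choice (fixed_mx g) i x ->
  f (der i x (fixed_mx g)) <= f (fixed_mx g) ->
  greedy_derandomizes (fixed_mx (fix_row g i x)) ->
  greedy_derandomizes (fixed_mx g).
Proof.
rewrite fixed_mx_fix_row => greedy_ix le_ix [s [greedy_s [int_s [le_s min_s]]]].
exists ((i, x) :: s); do !split=> //; exact: le_trans le_ix.
Qed.

Lemma greedy_decreasing_step {g : row_fixing} {i0 x0} :
  f (der i0 x0 (fixed_mx g)) < f (fixed_mx g) ->
  exists i x, [/\ greedy_choice (fixed_mx g) i x,
    f (der i x (fixed_mx g)) <= f (fixed_mx g) &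
    lower_fixings (fix_row g i x) \proper lower_fixings g].
Proof.
move=> lt_i0x0.
pose F ix := f (der ix.1 ix.2 (fixed_mx g)).
have [[i x] _ F_min] := @arg_minP _ R _ (i0, x0) predT F isT.
have lt_ix : F (i, x) < f (fixed_mx g) := le_lt_trans (F_min (i0, x0) isT) lt_i0x0.
exists i, x; split=> [j y | | ]; first exact: (F_min (j, y)).
  exact: ltW.
apply/properP; split.
  by apply/subsetP => h; rewrite !inE fixed_mx_fix_row => /lt_trans; apply.
by exists (fix_row g i x); rewrite !inE fixed_mx_fix_row ?lt_ix ?ltxx.
Qed.

Lemma greedy_neutral_step {g : row_fixing} i :
  (forall j y, f (fixed_mx g) <= f (der j y (fixed_mx g))) ->
  exists x, [/\ greedy_choice (fixed_mx g) i x,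
    f (der i x (fixed_mx g)) <= f (fixed_mx g) &
    lower_fixings (fix_row g i x) = lower_fixings g].
Proof.
move=> no_decrease; have [p_bounds p_sum1] := fixed_mx_stochastic g.
have [x le_x] := @exists_le_convex_comb _ _ (fixed_mx g i)
  (fun r => f (der i r (fixed_mx g)))
  (fun r => (p_bounds i r).1) (p_sum1 i).
have le_fx : f (der i x (fixed_mx g)) <= f (fixed_mx g).
  exact: le_trans le_x (f_concave _ (fixed_mx_stochastic g) i).
have eq_fx : f (der i x (fixed_mx g)) = f (fixed_mx g).
  by apply/eqP; rewrite eq_le le_fx no_decrease.
exists x; split=> // [j y|]; first exact: le_trans le_fx (no_decrease j y).
by apply/setP => h; rewrite !inE fixed_mx_fix_row eq_fx.
Qed.

Lemma greedy_derandomizes_fixed_mx (g : row_fixing) : greedy_derandomizes (fixed_mx g).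
Proof.
pose measure h := (#|lower_fixings h| * n.+1 + #|free_rows h|)%N.
have [m] := ubnP (measure g); elim: m g => // m IH g; rewrite ltnS => le_g_m.
have free_lt h : (#|free_rows h| < n.+1)%N.
  by rewrite ltnS (leq_trans (max_card _)) ?card_ord.
have [[i0 x0] /= lt_i0x0 | no_decrease] :=
  pickP [pred ix : 'I_n * 'I_c | f (der ix.1 ix.2 (fixed_mx g)) < f (fixed_mx g)].
  have [i [x [greedy_ix le_ix lower_proper]]] := greedy_decreasing_step lt_i0x0.
  apply: (greedy_derandomizes_step greedy_ix le_ix); apply: IH.
  apply: leq_trans le_g_m; apply: ltn_lex_measure (free_lt _) _.
  exact: proper_card.
have {}no_decrease j y : f (fixed_mx g) <= f (der j y (fixed_mx g)).
  by rewrite leNgt; apply/negbT/(no_decrease (j, y)).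
have [no_free | [i]] := set_0Vmem (free_rows g).
  by exists [::]; do !split=> //; exact: integral_fixed_mx.
rewrite inE => /eqP g_i.
have [x [greedy_ix le_ix lower_eq]] := greedy_neutral_step i no_decrease.
apply: (greedy_derandomizes_step greedy_ix le_ix); apply: IH.
apply: leq_trans le_g_m; rewrite /measure lower_eq ltn_add2l.
exact/proper_card/free_rows_fix_row.
Qed.

End GreedyDerandomization.

Theorem mainTheorem14 (R : realType) (n c : nat) (f : 'M[R]_(n, c) -> R)
    (p_init : 'M[R]_(n, c)) :
  entrywise_concave f ->
  row_stochastic p_init ->
  exists s : seq ('I_n * 'I_c),
    greedy_steps f p_init s /\
    let p_final := run_steps p_init s in
    integral_rows p_final /\
    f p_final <= f p_init /\
    (forall (i : 'I_n) (x : 'I_c), f p_final <= f (der i x p_final)).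
Proof.
move=> f_concave p_init_stochastic.
have no_fixing : @fixed_mx R n c p_init [ffun _ => None] = p_init.
  by apply/matrixP => k j; rewrite mxE ffunE.
have := @greedy_derandomizes_fixed_mx R n c f p_init f_concave p_init_stochastic
  [ffun _ => None].
by rewrite no_fixing.
Qed.
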